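(* Let $(\mathbb S,+,\cdot)$ be an Essential S-Structure with Base Unit $A$. If $s,t\in\mathbb S$ with $s=x-1+y\cdot A$ and $t=u-1+v\cdot A$ for some $y,v\in\Lambda$ and $x,u\in\mathbb S_0$, then $s+t=(x+u)-1+(y+v)\cdot A$.
   Context: An S-Structure is a triple $(\mathbb S,+,\cdot)$ where $\mathbb S$ is a set and $+,\cdot$ are binary operations on $\mathbb S$ such that: $(\mathbb S,+)$ is a commutative group with identity $0$ (the inverse of $s$ is written $-s$, and $s-t:=s+(-t)$); $\mathbb S$ is closed under $\cdot$; and there exists $s\in\mathbb S$ with $0\cdot s\neq 0$ or $s\cdot 0\neq 0$. Multiplication binds tighter than addition. The structures considered come with a distinguished element of $\mathbb S$ denoted $1$. It is Commutative if $s\cdot t=t\cdot s$ for all $s,t$. For a Commutative S-Structure and $\alpha\in\mathbb S$, put $\mathbb S_\alpha=\{s\in\mathbb S:0\cdot s=s\cdot 0=\alpha\}$ and $\Lambda=\{\alpha\in\mathbb S:\mathbb S_\alpha\neq\emptyset\}$. Wheel Distributive: $s\cdot(t+r)+(s\cdot 0)=(s\cdot t)+(s\cdot r)$ for all $s,t,r\in\mathbb S$. S-Associative: for all $m,n\in\mathbb S_0$ and $s\in\mathbb S$, $m\cdot(n\cdot s)=(m\cdot n)\cdot s-([(m-1)\cdot(n-1)]\cdot(0\cdot s))$. Base: if $\mathbb S_0\neq\emptyset$ and $\alpha\in\Lambda$, $q\in\mathbb S_\alpha$ is a Base for $\mathbb S_\alpha$ if $q+\beta\in\mathbb S_\alpha$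 for all $\beta\in\mathbb S_0$ and every $s\in\mathbb S_\alpha$ equals $q+\beta$ for some $\beta\in\mathbb S_0$. Coordinated: $\mathbb S_0\neq\emptyset$ and every $\mathbb S_\alpha$ with $\alpha\in\Lambda$ has a Base. Standard Bases: a Coordinated Commutative S-Structure has Standard Bases if there is a specified element $q_0(1)\in\mathbb S_1$ which is a Base for $\mathbb S_1$, and for every $\alpha\in\Lambda$ the element $q_0(\alpha):=\alpha\cdot(q_0(1)+1)-1$ lies in $\mathbb S_\alpha$ and is a Base for $\mathbb S_\alpha$. The Base Unit is $A:=q_0(1)+1$. An Essential S-Structure is an S-Structure that is Commutative, Wheel Distributive, S-Associative, has Standard Bases (in particular is Coordinated), satisfies $0,1\in\mathbb S_0$, and satisfies $\mathbb S_0=\{1\cdot x:x\in\mathbb S_0\}$. *)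

(* the additive commutative group (S,+) is a zmodType;
   the multiplication [mul] and the distinguished element [one] are
   explicit parameters (S is not a ring). *)
From HB Require Import structures.
From mathcomp Require Import all_boot all_order all_algebra.
Set Implicit Arguments. Unset Strict Implicit. Unset Printing Implicit Defensive.
Import GRing.Theory.
Local Open Scope ring_scope.

Section SStruct.
Variables (S : zmodType) (mul : S -> S -> S) (one : S).

(* S-Structure: (S,+) commutative group (given by zmodType), closed under mul
   (mul : S -> S -> S), and some s with 0.s <> 0 or s.0 <> 0. *)
Definition S_Structure : Prop :=
  exists s : S, mul 0 s <> 0 \/ mul s 0 <> 0.

Definition Commutative : Prop := forall s t : S, mul s t = mul t s.

Definition S_alpha (alpha s : S) : Prop := mul 0 s = alpha /\ mul s 0 = alpha.

Definition Lambda (alpha : S) : Prop := exists s, S_alpha alpha s.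

Definition Wheel_Distributive : Prop :=
  forall s t r : S, mul s (t + r) + mul s 0 = mul s t + mul s r.

Definition S_Associative : Prop :=
  forall m n s : S, S_alpha 0 m -> S_alpha 0 n ->
    mul m (mul n s) = mul (mul m n) s - mul (mul (m - one) (n - one)) (mul 0 s).

Definition Base (alpha q : S) : Prop :=
  (exists b, S_alpha 0 b) /\ Lambda alpha /\ S_alpha alpha q /\
  (forall beta, S_alpha 0 beta -> S_alpha alpha (q + beta)) /\
  (forall s, S_alpha alpha s -> exists beta, S_alpha 0 beta /\ s = q + beta).

Definition Coordinated : Prop :=
  (exists b, S_alpha 0 b) /\ forall alpha, Lambda alpha -> exists q, Base alpha q.

Definition q0 (q01 alpha : S) : S := mul alpha (q01 + one) - one.

(* Standard Bases w.r.t. the specified element q01 = q_0(1) *)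
Definition Standard_Bases (q01 : S) : Prop :=
  Coordinated /\ Commutative /\ S_alpha one q01 /\ Base one q01 /\
  forall alpha, Lambda alpha -> S_alpha alpha (q0 q01 alpha) /\ Base alpha (q0 q01 alpha).

Definition Base_Unit (q01 : S) : S := q01 + one.

Definition Essential (q01 : S) : Prop :=
  S_Structure /\ Commutative /\ Wheel_Distributive /\ S_Associative /\
  Standard_Bases q01 /\
  S_alpha 0 0 /\ S_alpha 0 one /\
  (forall x, S_alpha 0 x <-> exists y, S_alpha 0 y /\ x = mul one y).

End SStruct.

(* Wheel distributivity together with commutativity gives
   (y + v) * A = y * A + v * A - 0 * A, and 0 * A = 0 * q0(1) + 0 * 1 - 0 * 0 = 1
   because q0(1) lies in S_1 while 0 and 1 lie in S_0.  What remains is an identity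
   in the additive group. *)
From mathcomp Require Import all_boot all_order all_algebra.
Import GRing.Theory.
Local Open Scope ring_scope.

Section WheelArithmetic.
Variables (S : zmodType) (mul : S -> S -> S) (one : S).
Hypotheses (mulC : Commutative mul) (mulD : Wheel_Distributive mul).

Lemma wheel_mulDl (a b c : S) : mul (a + b) c = mul a c + mul b c - mul 0 c.
Proof. by rewrite !(mulC _ c) -mulD addrK. Qed.

Lemma wheel_mul0_base_unit (q01 : S) :
  S_alpha mul 0 0 -> S_alpha mul one q01 -> S_alpha mul 0 one ->
  mul 0 (Base_Unit one q01) = one.
Proof.
move=> [mul00 _] [mul0q _] [mul01 _].
by have := mulD 0 q01 one; rewrite mul00 mul0q mul01 !addr0.
Qed.

Lemma wheel_mulDl_base_unit (q01 a b : S) :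
  S_alpha mul 0 0 -> S_alpha mul one q01 -> S_alpha mul 0 one ->
  mul (a + b) (Base_Unit one q01) =
  mul a (Base_Unit one q01) + mul b (Base_Unit one q01) - one.
Proof. by move=> S00 S1q S01; rewrite wheel_mulDl wheel_mul0_base_unit. Qed.

End WheelArithmetic.

Lemma addr_shifted_coords (S : zmodType) (e x u a b : S) :
  (x - e + a) + (u - e + b) = (x + u) - e + (a + b - e).
Proof.
by rewrite [x - e + a]addrAC [u - e + b]addrAC [LHS]addrACA [RHS]addrACA [x + a + _]addrACA.
Qed.

Theorem proposition3p1p6 (S : zmodType) (mul : S -> S -> S) (one q01 : S)
  (HE : Essential mul one q01) (s t x y u v : S) :
  Lambda mul y -> Lambda mul v -> S_alpha mul 0 x -> S_alpha mul 0 u ->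
  s = x - one + mul y (Base_Unit one q01) ->
  t = u - one + mul v (Base_Unit one q01) ->
  s + t = (x + u) - one + mul (y + v) (Base_Unit one q01).
Proof.
move=> _ _ _ _ -> ->.
case: HE => _ [mulC [mulD [_ [[_ [_ [S1q _]]] [S00 [S01 _]]]]]].
by rewrite wheel_mulDl_base_unit // addr_shifted_coords.
Qed.
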